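(* Let $(X,d_X,\mu,T)$ and $(Y,d_Y,\nu,S)$ be compact metric measure-preserving systems, let $(a_r)_{r\ge1}$ be dense in $\operatorname{supp}\mu$ and $(b_r)_{r\ge1}$ dense in $\operatorname{supp}\nu$, and let $\lambda,\lambda'\in\mathcal J(T,S)$. If $\widetilde\Phi_{n,m,R}(\lambda)=\widetilde\Phi_{n,m,R}(\lambda')$ for all $n,m,R\ge1$, then $\lambda=\lambda'$.
   Context: A compact metric measure-preserving system $(X,d_X,\mu,T)$: $(X,d_X)$ compact metric, $\mu$ Borel probability, $T$ Borel with $T_\#\mu=\mu$. $\mathcal J(T,S)$: Borel probability measures on $X\times Y$ with marginals $\mu,\nu$ invariant under $T\times S$. For $z_i=(x_i,y_i)$, $\mathcal D^X_{n,m}=(d_X(T^ax_i,T^bx_j))_{1\le i,j\le n,0\le a,b<m}$. The anchored array is $\widetilde{\mathcal D}^X_{n,m,R}(z_1,\dots,z_n)=\bigl(\mathcal D^X_{n,m},(d_X(T^ax_i,a_r))_{1\le i\le n,0\le a<m,1\le r\le R}\bigr)$, and $\widetilde{\mathcal D}^Y_{n,m,R}$ is defined analogously using $d_Y$, $S$, and the anchors $b_r$. The anchored projection is $\widetilde\Phi_{n,m,R}(\lambda)=\mathrm{Law}_{\lambda^{\otimes n}}(\widetilde{\mathcal D}^X_{n,m,R},\widetilde{\mathcal D}^Y_{n,m,R})$. *)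

From HB Require Import structures.
From mathcomp Require Import all_boot all_order all_algebra.
From mathcomp Require Import all_classical all_reals all_analysis.
Unset Printing Implicit Defensive.
Import Order.TTheory GRing.Theory Num.Theory.
Import numFieldNormedType.Exports.
Local Open Scope classical_set_scope.
Local Open Scope ring_scope.

Section defs.
Context {R : realType}.

Definition is_metric {X : Type} (d : X -> X -> R) : Prop :=
  [/\ (forall x y, 0 <= d x y),
      (forall x y, d x y = 0 <-> x = y),
      (forall x y, d x y = d y x) &
      (forall x y z, d x z <= d x y + d y z)].

Definition mball {X : Type} (d : X -> X -> R) (x : X) (e : R) : set X :=
  [set y | d x y < e].

Definition mopen {X : Type} (d : X -> X -> R) (A : set X) : Prop :=
  forall x, A x -> exists2 e : R, 0 < e & mball d x e `<=` A.

Definition mcompact_space {X : Type} (d : X -> X -> R) : Prop :=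
  forall (I : Type) (U : I -> set X), (forall i, mopen d (U i)) ->
    [set: X] `<=` \bigcup_i U i ->
    exists2 F : set I, finite_set F & [set: X] `<=` \bigcup_(i in F) U i.

Definition borel_of {dis} {X : measurableType dis} (d : X -> X -> R) : Prop :=
  @measurable _ X = <<s [set A | mopen d A] >>.

Definition cmmps {dis} {X : measurableType dis} (d : X -> X -> R)
    (mu : probability X R) (T : X -> X) : Prop :=
  [/\ is_metric d, mcompact_space d, borel_of d,
      measurable_fun [set: X] T &
      (forall A, measurable A -> mu (T @^-1` A) = mu A)].

Definition msupp {dis} {X : measurableType dis} (d : X -> X -> R)
    (mu : probability X R) : set X :=
  [set x | forall e : R, 0 < e -> (0 < mu (mball d x e))%E].

Definition dense_seq1 {X : Type} (d : X -> X -> R) (a : nat -> X) (A : set X)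
  : Prop :=
  (forall r, (1 <= r)%N -> A (a r)) /\
  (forall x, A x -> forall e : R, 0 < e -> exists2 r, (1 <= r)%N & d x (a r) < e).

Definition joining {dX dY} {X : measurableType dX} {Y : measurableType dY}
    (mu : probability X R) (T : X -> X) (nu : probability Y R) (S : Y -> Y)
    (lam : probability (X * Y)%type R) : Prop :=
  [/\ (forall A, measurable A -> lam (A `*` [set: Y]) = mu A),
      (forall B, measurable B -> lam ([set: X] `*` B) = nu B) &
      (forall C, measurable C ->
         lam ((fun z : X * Y => (T z.1, S z.2)) @^-1` C) = lam C)].

Definition is_nfold_product {dZ} {Z : measurableType dZ} (n : nat)
    (lam : probability Z R) (P : probability (n.-tuple Z) R) : Prop :=
  forall A : 'I_n -> set Z, (forall i, measurable (A i)) ->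
    P [set t | forall i, A i (tnth t i)] = (\prod_(i < n) lam (A i))%E.

(** a real array indexed by a finite type, as a tuple (product Borel space) *)
Definition arr {I : finType} (f : I -> R) : #|I|.-tuple R :=
  [tuple f (enum_val i) | i < #|I|].

Definition Darr {X : Type} (d : X -> X -> R) (T : X -> X) (n m : nat)
    (x : 'I_n -> X) :=
  arr (fun p : 'I_n * 'I_n * 'I_m * 'I_m =>
         d (iter p.1.2 T (x p.1.1.1)) (iter p.2 T (x p.1.1.2))).

Definition Aarr {X : Type} (d : X -> X -> R) (T : X -> X) (anc : nat -> X)
    (n m k : nat) (x : 'I_n -> X) :=
  arr (fun p : 'I_n * 'I_m * 'I_k =>
         d (iter p.1.2 T (x p.1.1)) (anc (p.2 : nat).+1)).

Definition anchored_array {X : Type} (d : X -> X -> R) (T : X -> X)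
    (anc : nat -> X) (n m k : nat) (x : 'I_n -> X) :=
  (Darr d T n m x, Aarr d T anc n m k x).

Definition anchored_pair {X Y : Type} (dX : X -> X -> R) (T : X -> X)
    (a : nat -> X) (dY : Y -> Y -> R) (S : Y -> Y) (b : nat -> Y)
    (n m k : nat) (z : n.-tuple (X * Y)) :=
  (anchored_array dX T a n m k (fun i => (tnth z i).1),
   anchored_array dY S b n m k (fun i => (tnth z i).2)).

End defs.

From HB Require Import structures.
From mathcomp Require Import all_boot all_order all_algebra.
From mathcomp Require Import all_classical all_reals all_analysis.
From mathcomp Require Import lra.
Import Order.TTheory GRing.Theory Num.Theory.
Local Open Scope classical_set_scope.
Local Open Scope ring_scope.

(* For n = m = 1 the anchor part of the array of z = (x, y) lists the distances
   d_X(x, a_r) and d_Y(y, b_r), so lam and lam' agree on every "anchor box"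
   {z | d_X(x, a_r) < s_r, d_Y(y, b_r) < t_r for finitely many r}.  These boxes
   form a pi-system, hence lam = lam' on the sigma-algebra they generate.  Any
   measure with marginals mu and nu is carried by supp mu x supp nu, where the
   anchors are dense; so an open rectangle A x B has the same measure as the
   rectangle formed by the unions of the anchor balls inside A and inside B,
   which lies in that sigma-algebra.  Open rectangles form a pi-system
   generating the product Borel sigma-algebra, and the theorem follows. *)

Lemma exists_invS_lt {R : realType} (e : R) : 0 < e -> exists j : nat, j.+1%:R^-1 < e.
Proof. by move=> /ltr_add_invr[j]; rewrite add0r; exists j. Qed.

(* Anchor sequences are indexed from 1, hence [a r.+1]. *)
Definition anchor_ball {R : realType} {X : Type} (d : X -> X -> R)
    (a : nat -> X) (r : nat) (e : \bar R) : set X :=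
  [set x | ((d x (a r.+1))%:E < e)%E].

Definition anchor_interior {R : realType} {X : Type} (d : X -> X -> R)
    (a : nat -> X) (A : set X) : set X :=
  \bigcup_r \bigcup_(j in [set j | anchor_ball d a r (j.+1%:R^-1)%:E `<=` A])
    anchor_ball d a r (j.+1%:R^-1)%:E.

Section metric.
Context {R : realType} {X : Type} {d : X -> X -> R}.
Hypothesis md : is_metric d.

Lemma mball_center x e : 0 < e -> mball d x e x.
Proof. by case: md => _ d0 _ _ e0; rewrite /mball /= (proj2 (d0 x x) erefl). Qed.

Lemma mball_sub c r x e : d x c + r <= e -> mball d c r `<=` mball d x e.
Proof.
case: md => _ _ _ dtr le y; rewrite /mball /= => cy.
by have := dtr x c y; lra.
Qed.

Lemma mball_open x e : mopen d (mball d x e).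
Proof.
move=> y xy; exists (e - d x y); first by rewrite subr_gt0.
by apply: mball_sub; lra.
Qed.

Lemma mopenT : mopen d setT.
Proof. by move=> x _; exists 1. Qed.

Lemma mopenI {A B} : mopen d A -> mopen d B -> mopen d (A `&` B).
Proof.
move=> oA oB x [/oA[e e0 eA] /oB[e' e'0 e'B]].
exists (Order.min e e'); first by rewrite lt_min e0 e'0.
by move=> y; rewrite /mball /= lt_min => /andP[ye ye']; split; [apply: eA|apply: e'B].
Qed.

Lemma mcompact_finite_cover (e : R) : mcompact_space d -> 0 < e ->
  exists2 F : set X, finite_set F & [set: X] `<=` \bigcup_(q in F) mball d q e.
Proof.
move=> cd e0; apply: cd => [q|x _]; first exact: mball_open.
by exists x => //; apply: mball_center.
Qed.

Lemma anchor_ballE a r e : anchor_ball d a r e%:E = mball d (a r.+1) e.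
Proof.
by apply/seteqP; split => x; rewrite /anchor_ball /mball /= lte_fin; case: md => _ _ ->.
Qed.

Lemma anchor_interiorE {a A D} : dense_seq1 d a D -> mopen d A ->
  A `&` D = anchor_interior d a A `&` D.
Proof.
move=> [_ dense] oA; apply/seteqP; split => x [Ax Dx]; split => //; last first.
  by case: Ax => r _ [j /= jA]; apply: jA.
have [e e0 eA] := oA x Ax.
have [j je] : exists j : nat, j.+1%:R^-1 < e / 2 by apply: exists_invS_lt; lra.
have j0 : 0 < j.+1%:R^-1 :> R by rewrite invr_gt0.
have [[//|r] _ xr] := dense x Dx _ j0.
exists r => //; exists j; last by rewrite /anchor_ball /= lte_fin.
rewrite /= anchor_ballE; apply: subset_trans eA; apply: mball_sub.
by set u := j.+1%:R^-1 in je xr *; lra.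
Qed.

End metric.

Section borel_metric.
Context {R : realType} {dis : measure_display} {X : measurableType dis}.
Context {d : X -> X -> R}.
Hypotheses (md : is_metric d) (bd : borel_of d).

Lemma mopen_measurable {A} : mopen d A -> measurable A.
Proof. by rewrite bd; apply: sub_sigma_algebra. Qed.

Lemma mball_measurable x e : measurable (mball d x e).
Proof. exact/mopen_measurable/mball_open. Qed.

Lemma anchor_ball_measurable a r e : measurable (anchor_ball d a r e).
Proof.
case: e => [e||]; first by rewrite anchor_ballE //; exact: mball_measurable.
  rewrite (_ : anchor_ball _ _ _ _ = setT) //.
  by apply/seteqP; split => x // _; exact: ltey.
rewrite (_ : anchor_ball _ _ _ _ = set0) //.
by apply/seteqP; split => x //; rewrite /anchor_ball /= ltNye.
Qed.

Lemma anchor_interior_measurable a A : measurable (anchor_interior d a A).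
Proof.
apply: bigcupT_measurable => r; apply: bigcup_measurable => j _.
exact: anchor_ball_measurable.
Qed.

Lemma msupp_compl_negligible (mu : probability X R) :
  mcompact_space d -> mu.-negligible (~` msupp d mu).
Proof.
move=> cd; pose rad j : R := j.+1%:R^-1.
have cover j :
    exists s : seq X, [set: X] `<=` \bigcup_(q in [set` s]) mball d q (rad j).
  have [F fF FX] := mcompact_finite_cover md (rad j) cd ltac:(by rewrite invr_gt0).
  by have [s sF] := proj1 (finite_seqP F) fF; exists s; rewrite -sF.
have [s sP] := choice cover.
pose null_ball j q := mu (mball d q (rad j)) == 0%E.
(* A point outside the support has a null ball B(x, e), which contains every
   cover ball of radius < e/2 through x. *)
apply: (@negligibleS _ _ _ _
  (\bigcup_j \big[setU/set0]_(q <- s j | null_ball j q) mball d q (rad j))); last first.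
  apply: negligible_bigcup => j; apply: big_ind => [|A B|q /eqP q0].
  - exact: negligible_set0.
  - exact: negligibleU.
  - exact/negligibleP/q0/mball_measurable.
move=> x xNsupp.
have [e e0 xe0] : exists2 e, 0 < e & mu (mball d x e) = 0%E.
  apply: contra_notP xNsupp => H e e0; rewrite lt0e measure_ge0 andbT.
  by apply/eqP => xe0; apply: H; exists e.
have [j je] : exists j : nat, rad j < e / 2 by apply: exists_invS_lt; lra.
have [q sq qx] := sP j x I.
have qe : mball d q (rad j) `<=` mball d x e.
  apply: (mball_sub md); case: md => _ _ dC _; rewrite dC.
  by move: qx; rewrite /mball /=; lra.
exists j => //; rewrite (big_rem q) //=.
suff -> : null_ball j q by left.
by apply/eqP/(subset_measure0 _ _ qe xe0); exact: mball_measurable.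
Qed.

End borel_metric.

Section measure_facts.
Context {R : realType}.

Lemma measure_eq_off_negligible {d} {T : measurableType d}
    (m : {measure set T -> \bar R}) (N C D : set T) :
  measurable C -> measurable D -> m.-negligible N -> C `\` N = D `\` N ->
  m C = m D.
Proof.
move=> mC mD [M [mM M0 NM]] CDN.
have offM E : measurable E -> m E = m (E `\` M).
  move=> mE; rewrite -{1}(setUIDK E M) setUC measureU0 //.
  - exact: measurableD.
  - exact: measurableI.
  - by apply: (subset_measure0 _ mM _ M0) => //; exact: measurableI.
have offN E : E `\` M = (E `\` N) `\` M.
  apply/seteqP; split => x [Ex Mx]; last by case: Ex.
  by split => //; split => // /NM.
by rewrite (offM C) // (offM D) // (offN C) (offN D) CDN.
Qed.

Lemma negligible_setXT {d1 d2} {X : measurableType d1} {Y : measurableType d2}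
    {mu : {measure set X -> \bar R}} {lam : {measure set (X * Y) -> \bar R}} {A} :
  (forall A, measurable A -> lam (A `*` setT) = mu A) ->
  mu.-negligible A -> lam.-negligible (A `*` setT).
Proof.
move=> lamX [N [mN N0 AN]]; exists (N `*` setT); split.
- exact: measurableX.
- by rewrite lamX.
- by move=> z [/AN].
Qed.

Lemma negligible_setTX {d1 d2} {X : measurableType d1} {Y : measurableType d2}
    {nu : {measure set Y -> \bar R}} {lam : {measure set (X * Y) -> \bar R}} {B} :
  (forall B, measurable B -> lam (setT `*` B) = nu B) ->
  nu.-negligible B -> lam.-negligible (setT `*` B).
Proof.
move=> lamY [N [mN N0 BN]]; exists (setT `*` N); split.
- exact: measurableX.
- by rewrite lamY.
- by move=> z [_ /BN].
Qed.

Lemma probability_eq_sigma {d} {T : measurableType d} {G : set (set T)}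
    {m1 m2 : probability T R} :
  G `<=` measurable -> setI_closed G -> G setT ->
  (forall A, G A -> m1 A = m2 A) -> forall A, <<s G >> A -> m1 A = m2 A.
Proof.
move=> Gm GI GT eqG.
apply: (@g_sigma_algebra_measure_unique _ _ _ G Gm (fun _ => setT) (fun _ => GT) _
  m1 m2 GI eqG).
- by rewrite bigcup_const.
- by move=> _; rewrite (le_lt_trans (probability_le1 _ measurableT)) // ltry.
Qed.

Lemma measurable_prod_sub_rects {d1 d2} {X : measurableType d1} {Y : measurableType d2}
    {GX : set (set X)} {GY : set (set Y)} :
  measurable = <<s GX >> -> measurable = <<s GY >> -> GX setT -> GY setT ->
  measurable `<=` <<s [set A `*` B | A in GX & B in GY] >>.
Proof.
move=> eX eY GXT GYT; set Rect := <<s _ >>.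
have RectXT A : measurable A -> Rect (A `*` setT).
  suff sub : <<s GX >> `<=` image_set_system setT fst Rect.
    by rewrite eX => /sub; rewrite /image_set_system /= setTI setXT.
  apply: smallest_sub => [|A' GA'].
    exact/sigma_algebra_image/smallest_sigma_algebra.
  rewrite /image_set_system /= setTI -setXT.
  by apply: sub_sigma_algebra; exists A' => //; exists setT.
have RectTX B : measurable B -> Rect (setT `*` B).
  suff sub : <<s GY >> `<=` image_set_system setT snd Rect.
    by rewrite eY => /sub; rewrite /image_set_system /= setTI setTX.
  apply: smallest_sub => [|B' GB'].
    exact/sigma_algebra_image/smallest_sigma_algebra.
  rewrite /image_set_system /= setTI -setTX.
  by apply: sub_sigma_algebra; exists setT => //; exists B'.
rewrite measurable_prod_measurableType; apply: smallest_sub.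
  exact: smallest_sigma_algebra.
move=> _ [A mA [B mB <-]]; rewrite -(setIT A) -(setTI B) setXI.
by apply: (@measurableI _ (g_sigma_algebraType _)); [exact: RectXT|exact: RectTX].
Qed.

End measure_facts.

Definition mopen_rects {R : realType} {X Y : Type} (dX : X -> X -> R)
    (dY : Y -> Y -> R) : set (set (X * Y)) :=
  [set A `*` B | A in mopen dX & B in mopen dY].

Section mopen_rects.
Context {R : realType} {dx dy : measure_display}.
Context {X : measurableType dx} {Y : measurableType dy}.
Context {dX : X -> X -> R} {dY : Y -> Y -> R}.

Lemma mopen_rects_setI_closed : setI_closed (mopen_rects dX dY).
Proof.
move=> _ _ [A oA [B oB <-]] [A' oA' [B' oB' <-]].
rewrite -setXI; exists (A `&` A'); first exact: mopenI oA oA'.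
by exists (B `&` B'); first exact: mopenI oB oB'.
Qed.

Lemma mopen_rects_setT : mopen_rects dX dY setT.
Proof. by exists setT; [exact: mopenT|exists setT; [exact: mopenT|exact: setXTT]]. Qed.

Hypotheses (bX : borel_of dX) (bY : borel_of dY).

Lemma mopen_rects_measurable : mopen_rects dX dY `<=` measurable.
Proof.
move=> _ [A oA [B oB <-]].
by apply: measurableX; [exact: (mopen_measurable bX oA)|
                        exact: (mopen_measurable bY oB)].
Qed.

Lemma measurable_sub_mopen_rects : measurable `<=` <<s mopen_rects dX dY >>.
Proof. exact: (measurable_prod_sub_rects bX bY mopenT mopenT). Qed.

End mopen_rects.

Section anchor_boxes.
Context {R : realType} {dx dy : measure_display}.
Context {X : measurableType dx} {Y : measurableType dy}.
Variables (dX : X -> X -> R) (dY : Y -> Y -> R) (a : nat -> X) (b : nat -> Y).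

Definition anchor_box (s t : nat -> \bar R) : set (X * Y) :=
  \bigcap_r (anchor_ball dX a r (s r) `*` anchor_ball dY b r (t r)).

(* Radii are +oo, i.e. impose no constraint, beyond the first k anchors. *)
Definition anchor_boxes : set (set (X * Y)) :=
  [set C | exists k s t,
    (forall r, (k <= r)%N -> s r = +oo%E /\ t r = +oo%E) /\ C = anchor_box s t].

Lemma anchor_boxI s t s' t' :
  anchor_box s t `&` anchor_box s' t' =
  anchor_box (fun r => Order.min (s r) (s' r)) (fun r => Order.min (t r) (t' r)).
Proof.
apply/seteqP; split => z /=.
  move=> [st st'] r _; have [xs yt] := st r I; have [xs' yt'] := st' r I.
  by split; rewrite /anchor_ball /= lt_min; apply/andP.
by move=> st; split => r _; have [] := st r I; rewrite /anchor_ball /= !lt_min;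
  move=> /andP[? ?] /andP[? ?].
Qed.

Lemma anchor_boxes_setI_closed : setI_closed anchor_boxes.
Proof.
move=> _ _ [k [s [t [st ->]]]] [k' [s' [t' [st' ->]]]].
exists (maxn k k'), (fun r => Order.min (s r) (s' r)),
  (fun r => Order.min (t r) (t' r)).
split; last exact: anchor_boxI.
by move=> r; rewrite geq_max => /andP[/st[-> ->] /st'[-> ->]]; rewrite !minxx.
Qed.

Lemma anchor_boxes_setT : anchor_boxes setT.
Proof.
exists 0%N, (fun _ => +oo%E), (fun _ => +oo%E); split => //.
by apply/seteqP; split => z // _ r _; split; exact: ltey.
Qed.

Lemma anchor_ballXT_boxes r e : anchor_boxes (anchor_ball dX a r e `*` setT).
Proof.
exists r.+1, (fun r' => if r' == r then e else +oo%E), (fun _ => +oo%E); split.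
  by move=> r' rr'; case: eqP => // rr; rewrite rr ltnn in rr'.
apply/seteqP; split => z /=.
  move=> [xe _] r' _; split; last exact: ltey.
  by case: eqP => [->//|_]; exact: ltey.
by move=> box; have [] := box r I; rewrite eqxx.
Qed.

Lemma anchor_ballTX_boxes r e : anchor_boxes (setT `*` anchor_ball dY b r e).
Proof.
exists r.+1, (fun _ => +oo%E), (fun r' => if r' == r then e else +oo%E); split.
  by move=> r' rr'; case: eqP => // rr; rewrite rr ltnn in rr'.
apply/seteqP; split => z /=.
  move=> [_ ye] r' _; split; first exact: ltey.
  by case: eqP => [->//|_]; exact: ltey.
by move=> box; have [] := box r I; rewrite eqxx.
Qed.

Lemma anchor_interior_sigma A B :
  <<s anchor_boxes >> (anchor_interior dX a A `*` anchor_interior dY b B).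
Proof.
pose M := g_sigma_algebraType anchor_boxes.
rewrite -(setIT (anchor_interior dX a A)) -(setTI (anchor_interior dY b B)) setXI.
apply: (@measurableI _ M).
- rewrite setX_bigcupl; apply: (@bigcupT_measurable _ M) => r.
  rewrite setX_bigcupl; apply: (@bigcup_measurable _ M) => j _.
  by apply: sub_sigma_algebra; exact: anchor_ballXT_boxes.
- rewrite setX_bigcupr; apply: (@bigcupT_measurable _ M) => r.
  rewrite setX_bigcupr; apply: (@bigcup_measurable _ M) => j _.
  by apply: sub_sigma_algebra; exact: anchor_ballTX_boxes.
Qed.

End anchor_boxes.

(* For n = m = 1, the anchor part of the array has the distance to a_(r+1) at
   index (ord0, ord0, r). *)
Definition anchor_cells {R : realType} {n : nat} (k : nat) (s t : nat -> \bar R) :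
  set ((n.-tuple R * #|{: 'I_1 * 'I_1 * 'I_k}|.-tuple R) *
       (n.-tuple R * #|{: 'I_1 * 'I_1 * 'I_k}|.-tuple R)) :=
  [set w | forall r : 'I_k,
    let i := enum_rank ((ord0, ord0, r) : 'I_1 * 'I_1 * 'I_k) in
    (tnth w.1.2 i)%:E < s r /\ (tnth w.2.2 i)%:E < t r]%E.

Lemma measurable_EFin_lt {R : realType} (e : \bar R) :
  measurable [set x : R | (x%:E < e)%E].
Proof.
case: e => [e||].
- rewrite (_ : [set x | _] = `]-oo, e[%classic); first exact: measurable_itv.
  by apply/seteqP; split => x; rewrite /= in_itv /= lte_fin.
- by rewrite (_ : [set x | _] = setT) //; apply/seteqP; split => x //= _; exact: ltey.
- by rewrite (_ : [set x | _] = set0) //; apply/seteqP; split => x //=; rewrite ltNye.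
Qed.

Lemma anchor_cells_measurable {R : realType} n k (s t : nat -> \bar R) :
  measurable (@anchor_cells R n k s t).
Proof.
pose W := ((n.-tuple R * #|{: 'I_1 * 'I_1 * 'I_k}|.-tuple R) *
           (n.-tuple R * #|{: 'I_1 * 'I_1 * 'I_k}|.-tuple R))%type.
have mlt (f : W -> R) e : measurable_fun setT f -> measurable [set w | (f w)%:E < e]%E.
  move=> mf; rewrite -[X in measurable X]setTI.
  exact: mf measurableT _ (measurable_EFin_lt e).
rewrite (_ : anchor_cells _ _ _ = \bigcap_(r in [set: 'I_k])
    let i := enum_rank ((ord0, ord0, r) : 'I_1 * 'I_1 * 'I_k) in
    [set w : W | (tnth w.1.2 i)%:E < s r]%E `&`
    [set w : W | (tnth w.2.2 i)%:E < t r]%E).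
  apply: fin_bigcap_measurable => [|r _]; first exact: finite_finset.
  apply: measurableI; apply: mlt; apply: (measurableT_comp (measurable_tnth _)).
  - exact: measurableT_comp measurable_snd measurable_fst.
  - exact: measurableT_comp measurable_snd measurable_snd.
by apply/seteqP; split => w /= cells r; [move=> _; exact: cells|exact: cells].
Qed.

Lemma tnth_Aarr_anchor {R : realType} {X : Type} (d : X -> X -> R) (T : X -> X)
    (anc : nat -> X) k (x : 'I_1 -> X) (r : 'I_k) :
  tnth (Aarr d T anc 1 1 k x) (enum_rank ((ord0, ord0, r) : 'I_1 * 'I_1 * 'I_k)) =
  d (x ord0) (anc r.+1).
Proof. by rewrite /Aarr /arr tnth_mktuple enum_rankK. Qed.

Section anchor_boxes_measure.
Context {R : realType} {dx dy : measure_display}.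
Context {X : measurableType dx} {Y : measurableType dy}.
Context {dX : X -> X -> R} {dY : Y -> Y -> R} {a : nat -> X} {b : nat -> Y}.
Hypotheses (mX : is_metric dX) (bX : borel_of dX).
Hypotheses (mY : is_metric dY) (bY : borel_of dY).

Lemma anchor_box_measurable s t : measurable (anchor_box dX dY a b s t).
Proof.
apply: bigcapT_measurable => r.
by apply: measurableX; exact: anchor_ball_measurable.
Qed.

Lemma anchor_boxes_measurable : anchor_boxes dX dY a b `<=` measurable.
Proof. by move=> _ [k [s [t [_ ->]]]]; exact: anchor_box_measurable. Qed.

Lemma anchor_box_pushforward (T : X -> X) (S : Y -> Y)
    {lam : probability (X * Y)%type R}
    {P1 : probability (1.-tuple (X * Y)%type) R} {k s t} :
  is_nfold_product 1 lam P1 ->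
  (forall r, (k <= r)%N -> s r = +oo%E /\ t r = +oo%E) ->
  lam (anchor_box dX dY a b s t) =
  pushforward P1 (anchored_pair dX T a dY S b 1 1 k) (anchor_cells k s t).
Proof.
move=> P1lam st; rewrite /pushforward.
have -> : anchored_pair dX T a dY S b 1 1 k @^-1` anchor_cells k s t =
          [set z | forall i : 'I_1, anchor_box dX dY a b s t (tnth z i)].
  apply/seteqP; split => z /= cells.
  - move=> i r _; rewrite (ord1 i).
    have [rk|kr] := ltnP r k; last by have [-> ->] := st r kr; split; exact: ltey.
    by have := cells (Ordinal rk); rewrite /= !tnth_Aarr_anchor.
  - by move=> r; rewrite /= !tnth_Aarr_anchor; exact: (cells ord0 r I).
rewrite (P1lam (fun=> anchor_box dX dY a b s t)) ?big_ord1 // => _.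
exact: anchor_box_measurable.
Qed.

Lemma measure_openX_anchor_interior {mu : probability X R} {nu : probability Y R}
    {lam : probability (X * Y)%type R} {A B} :
  mcompact_space dX -> mcompact_space dY ->
  dense_seq1 dX a (msupp dX mu) -> dense_seq1 dY b (msupp dY nu) ->
  (forall A, measurable A -> lam (A `*` setT) = mu A) ->
  (forall B, measurable B -> lam (setT `*` B) = nu B) ->
  mopen dX A -> mopen dY B ->
  lam (A `*` B) = lam (anchor_interior dX a A `*` anchor_interior dY b B).
Proof.
move=> cX cY aX bY' lamX lamY oA oB.
apply: (@measure_eq_off_negligible _ _ _ lam (~` (msupp dX mu `*` msupp dY nu))).
- by apply: measurableX; [exact: (mopen_measurable bX oA)|
                          exact: (mopen_measurable bY oB)].
- by apply: measurableX; exact: anchor_interior_measurable.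
- have NX := negligible_setXT lamX (msupp_compl_negligible mX bX mu cX).
  have NY := negligible_setTX lamY (msupp_compl_negligible mY bY nu cY).
  apply: (negligibleS _ (negligibleU NX NY)).
  by move=> [x y] /not_andP[]; [left|right].
- rewrite !setDE setCK -!setXI.
  by rewrite (anchor_interiorE mX aX oA) (anchor_interiorE mY bY' oB).
Qed.

End anchor_boxes_measure.

Theorem theorem13 (R : realType)
  (dispX dispY : measure_display)
  (X : measurableType dispX) (Y : measurableType dispY)
  (dX : X -> X -> R) (mu : probability X R) (T : X -> X)
  (dY : Y -> Y -> R) (nu : probability Y R) (S : Y -> Y)
  (a : nat -> X) (b : nat -> Y)
  (lam lam' : probability (X * Y)%type R)
  (P P' : forall n : nat, probability (n.-tuple (X * Y)%type) R) :
  cmmps dX mu T -> cmmps dY nu S ->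
  dense_seq1 dX a (msupp dX mu) -> dense_seq1 dY b (msupp dY nu) ->
  joining mu T nu S lam -> joining mu T nu S lam' ->
  (forall n, is_nfold_product n lam (P n)) ->
  (forall n, is_nfold_product n lam' (P' n)) ->
  (forall n m k : nat, (1 <= n)%N -> (1 <= m)%N -> (1 <= k)%N ->
     forall B, measurable B ->
       pushforward (P n) (anchored_pair dX T a dY S b n m k) B =
       pushforward (P' n) (anchored_pair dX T a dY S b n m k) B) ->
  forall C, measurable C -> lam C = lam' C.
Proof.
move=> [mX cX bX _ _] [mY cY bY _ _] aX bY' [lamX lamY _] [lamX' lamY' _] Pn P'n push.
have boxes_eq C : anchor_boxes dX dY a b C -> lam C = lam' C.
  case=> k [s [t [st ->]]].
  have st1 r : (k.+1 <= r)%N -> s r = +oo%E /\ t r = +oo%E by move/ltnW/st.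
  rewrite (anchor_box_pushforward mX bX mY bY T S (Pn 1%N) st1).
  rewrite (anchor_box_pushforward mX bX mY bY T S (P'n 1%N) st1).
  by apply: push => //; exact: anchor_cells_measurable.
have sigma_eq := probability_eq_sigma (anchor_boxes_measurable mX bX mY bY)
  (anchor_boxes_setI_closed dX dY a b) (anchor_boxes_setT dX dY a b) boxes_eq.
have rects_eq C : mopen_rects dX dY C -> lam C = lam' C.
  case=> A oA [B oB <-].
  rewrite (measure_openX_anchor_interior mX bX mY bY cX cY aX bY' lamX lamY oA oB).
  rewrite (measure_openX_anchor_interior mX bX mY bY cX cY aX bY' lamX' lamY' oA oB).
  by apply: sigma_eq; exact: anchor_interior_sigma.
move=> C mC.
apply: (probability_eq_sigma (mopen_rects_measurable bX bY)
  mopen_rects_setI_closed mopen_rects_setT rects_eq).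
exact: measurable_sub_mopen_rects.
Qed.
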